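(* Let $G$ be a connected interval graph with a fixed interval representation in which all right endpoints are distinct, and let $V_2=\{w_1,\dots,w_{|V_2|}\}$ and $C_1,\dots,C_{|V_2|}$ be as defined in the context. Then for every dominating set $D$ of $G$ and every $i\in\{1,\dots,|V_2|\}$, $|D\cap C_i|\ge1$. Consequently (since $V_2\cap C_i=\{w_i\}$ and the $C_i$ partition $V(G)$), $V_2$ is a minimum dominating set of $G$.
   Context: $G$ is given by closed intervals $I_v=[l(v),r(v)]$, $v\in V(G)$, with $uv\in E(G)$ iff $I_u\cap I_v\ne\emptyset$. Labeling procedure, repeated until all vertices are labeled: (1) pick the unlabeled vertex $v_i$ with minimum $r$-value among unlabeled vertices and give it label 1; (2) let $v_j$ be the vertex of $N[v_i]$ with maximum $r$-value (possibly already labeled, possibly $v_j=v_i$) and (re)label $v_j$ with label 2; (3) give label 3 to every still unlabeled vertex of $N(v_j)$. $V_k$ is the set of vertices whose final label is $k$. Order $V_2$ as $w_1,\dots,w_{|V_2|}$ with $r(w_1)<\dots<r(w_{|V_2|})$. Define $C_1=\{v: r(v)\le r(w_1)\}$, $C_i=\{v: r(w_{i-1})<r(v)\le r(w_i)\}$ for $2\le i\le |V_2|-1$, and $C_{|V_2|}=\{v: r(w_{|V_2|-1})<r(v)\}$ (if $|V_2|=1$, $C_1=V(G)$). $N[v]$, $N(v)$ are closed and open neighbourhoods. A set $D$ is a dominating set if every vertex is in $D$ or adjacent to a vertex of $D$. *)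

From HB Require Import structures.
From mathcomp Require Import all_boot all_order all_algebra.
Set Implicit Arguments. Unset Strict Implicit. Unset Printing Implicit Defensive.
Import Order.TTheory GRing.Theory Num.Theory.
Local Open Scope ring_scope.

Section IntervalGraph.
Variables (R : realDomainType) (V : finType) (l r : V -> R).

Definition meets (u v : V) : bool := (l u <= r v) && (l v <= r u).
Definition iadj (u v : V) : bool := (u != v) && meets u v.
Definition cnbhd (v : V) : {set V} := [set u | meets v u].
Definition onbhd (v : V) : {set V} := [set u | iadj v u].

Definition dominating (D : {set V}) : Prop :=
  forall v, v \in D \/ exists2 u, u \in D & iadj u v.

Definition connected_graph : Prop := forall u v, connect iadj u v.

(* Labels: 0 = unlabeled, 1, 2, 3. One round of the labeling procedure. *)
Definition label_step (lab : {ffun V -> nat}) : {ffun V -> nat} :=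
  match [pick v | (lab v == 0%N) &&
                  [forall u, (lab u == 0%N) ==> (r v <= r u)]] with
  | None => lab
  | Some vi =>
    match [pick v | (v \in cnbhd vi) &&
                    [forall u, (u \in cnbhd vi) ==> (r u <= r v)]] with
    | None => lab
    | Some vj =>
      [ffun u => if u == vj then 2%N
                 else if u == vi then 1%N
                 else if (lab u == 0%N) && (u \in onbhd vj) then 3%N
                 else lab u]
    end
  end.

(* Each round labels at least one new vertex, so #|V| rounds finish. *)
Definition final_labels : {ffun V -> nat} :=
  iter #|V| label_step [ffun => 0%N].

Definition V_lab (k : nat) : {set V} := [set v | final_labels v == k].

Definition rV2 : seq R := sort <=%R [seq r w | w in V_lab 2].
Definition rw (i : nat) : R := nth 0 rV2 i.-1.   (* r(w_i), 1-based *)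

(* C_i, 1-based, 1 <= i <= |V2| *)
Definition Cblock (i : nat) : {set V} :=
  let k := #|V_lab 2| in
  if k == 1%N then [set: V]
  else if i == 1%N then [set v | r v <= rw 1]
  else if i == k then [set v | rw k.-1 < r v]
  else [set v | (rw i.-1 < r v) && (r v <= rw i)].

End IntervalGraph.

From HB Require Import structures.
From mathcomp Require Import all_boot all_order all_algebra.
Import Order.TTheory GRing.Theory Num.Theory.
Local Open Scope ring_scope.

(* Every vertex w that receives label 2 in a round has a witness: the vertex a
   labelled 1 in that round.  All neighbours of a end no later than w (w was
   chosen with maximal r in N[a]), and a starts after every earlier 2-vertex
   ends (a was still unlabelled, and earlier 2-vertices end before any
   unlabelled vertex starts).  So any vertex dominating the witness of w_i lies
   in the block C_i; the blocks are disjoint, hence every dominating set has at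
   least |V_2| vertices.  V_2 itself dominates since every labelled vertex meets
   a 2-vertex. *)

Section LabelingProcedure.
Variables (R : realDomainType) (V : finType) (l r : V -> R).
Hypothesis l_le_r : forall v, l v <= r v.
Hypothesis r_inj : injective r.

Lemma meets_refl v : meets l r v v.
Proof. by rewrite /meets l_le_r. Qed.

Lemma meetsC u v : meets l r u v = meets l r v u.
Proof. by rewrite /meets andbC. Qed.

Definition relabel (lab : {ffun V -> nat}) (vi vj : V) : {ffun V -> nat} :=
  [ffun u => if u == vj then 2%N
             else if u == vi then 1%N
             else if (lab u == 0%N) && (u \in onbhd l r vj) then 3%N
             else lab u].

Lemma label_step_labelled (lab : {ffun V -> nat}) :
  (forall v, lab v != 0%N) -> label_step l r lab = lab.
Proof.
move=> lab_neq0; rewrite /label_step.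
by case: pickP => [vi /andP[vi0 _]|//]; rewrite (negbTE (lab_neq0 vi)) in vi0.
Qed.

Lemma label_stepE {lab : {ffun V -> nat}} {v0 : V} : lab v0 == 0%N ->
  exists vi vj, [/\ lab vi == 0%N, forall u, lab u == 0%N -> r vi <= r u,
    meets l r vi vj, forall u, meets l r vi u -> r u <= r vj
    & label_step l r lab = relabel lab vi vj].
Proof.
move=> v00; rewrite /label_step.
case: pickP => [vi /andP[vi0 /forallP vi_min]|no_min]; last first.
  case: (arg_minP (P := fun v => lab v == 0%N) r v00) => vm vm0 vm_min.
  have := no_min vm; rewrite vm0 /= => /negP; case.
  by apply/forallP => u; apply/implyP; apply: vm_min.
case: pickP => [vj /andP[vj_nb /forallP vj_max]|no_max]; last first.
  have vi_nb : vi \in cnbhd l r vi by rewrite inE meets_refl.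
  case: (arg_maxP (P := fun v => v \in cnbhd l r vi) r vi_nb) => vm vm_nb vm_max.
  have := no_max vm; rewrite vm_nb /= => /negP; case.
  by apply/forallP => u; apply/implyP; apply: vm_max.
exists vi, vj; split=> //.
- by move=> u u0; apply: (implyP (vi_min u)).
- by move: vj_nb; rewrite inE.
- by move=> u vi_u; apply: (implyP (vj_max u)); rewrite inE.
Qed.

Definition labels_covered (lab : {ffun V -> nat}) :=
  forall v, lab v != 0%N -> exists2 w, lab w == 2%N & meets l r w v.

Definition labels_separated (lab : {ffun V -> nat}) :=
  forall w v, lab w == 2%N -> lab v == 0%N -> r w < l v.

Definition labels_witnessed (lab : {ffun V -> nat}) :=
  forall w, lab w == 2%N -> exists a,
    (forall u, meets l r a u -> r u <= r w) /\
    (forall w', lab w' == 2%N -> r w' < r w -> r w' < l a).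

Definition labels_invariant (lab : {ffun V -> nat}) :=
  [/\ labels_covered lab, labels_separated lab & labels_witnessed lab].

Section Relabel.
Variables (lab : {ffun V -> nat}) (vi vj : V).
Hypotheses (vi0 : lab vi == 0%N) (vi_min : forall u, lab u == 0%N -> r vi <= r u).
Hypotheses (vi_vj : meets l r vi vj) (vj_max : forall u, meets l r vi u -> r u <= r vj).

Lemma relabel_eq2 u : (relabel lab vi vj u == 2%N) = (u == vj) || (lab u == 2%N).
Proof.
rewrite ffunE; have [//|_] := eqVneq u vj.
have [->|_] := eqVneq u vi; first by rewrite (eqP vi0).
by case: ifP => // /andP[/eqP -> _].
Qed.

Lemma relabel_eq0 u : relabel lab vi vj u == 0%N ->
  [/\ lab u == 0%N, u != vi & ~~ meets l r vj u].
Proof.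
rewrite ffunE; have [//|u_vj] := eqVneq u vj; have [//|u_vi] := eqVneq u vi.
case: ifP => // /negbT; rewrite negb_and => /orP[/negbTE-> //|].
by rewrite inE /iadj eq_sym u_vj => nmeets u0; split.
Qed.

Lemma relabel_vi : relabel lab vi vj vi != 0%N.
Proof. by rewrite ffunE eqxx; case: ifP. Qed.

Lemma relabel_covered : labels_covered lab -> labels_covered (relabel lab vi vj).
Proof.
move=> covered v; have vj2 : relabel lab vi vj vj == 2%N by rewrite relabel_eq2 eqxx.
rewrite ffunE; have [->|v_vj] := eqVneq v vj; first by exists vj; rewrite ?meets_refl.
have [->|v_vi] := eqVneq v vi; first by exists vj; rewrite // meetsC.
case: ifP => [/andP[_]|_ v_neq0]; first by rewrite inE => /andP[_ ?]; exists vj.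
by have [w w2 w_v] := covered v v_neq0; exists w; rewrite // relabel_eq2 w2 orbT.
Qed.

Lemma relabel_separated : labels_separated lab -> labels_separated (relabel lab vi vj).
Proof.
move=> separated w v; rewrite relabel_eq2 => /orP[/eqP->|w2] /relabel_eq0[v0 v_vi];
  last by rewrite separated.
(* [l vj <= r vi < r v], so the non-neighbour [v] of [vj] starts after [vj] ends. *)
have vi_v : r vi < r v.
  by rewrite lt_neqAle vi_min // andbT; apply: contra_neq v_vi => /r_inj.
rewrite /meets (le_trans _ (ltW vi_v)) 1?ltNge //.
by case/andP: vi_vj.
Qed.

Lemma relabel_witnessed : labels_separated lab -> labels_witnessed lab ->
  labels_witnessed (relabel lab vi vj).
Proof.
move=> separated witnessed.
have w_vi w : lab w == 2%N -> r w < l vi by move/separated; apply.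
have w_vj w : lab w == 2%N -> r w < r vj.
  by move/w_vi/lt_le_trans; apply; rewrite (le_trans (l_le_r vi)) ?vj_max ?meets_refl.
move=> w; rewrite relabel_eq2 => /orP[/eqP->|w2].
  exists vi; split=> // w'; rewrite relabel_eq2 => /orP[/eqP->|/w_vi//].
  by rewrite ltxx.
have [a [a_nb a_sep]] := witnessed w w2; exists a; split=> // w'.
rewrite relabel_eq2 => /orP[/eqP->|]; last exact: a_sep.
by move/lt_trans/(_ (w_vj w w2)); rewrite ltxx.
Qed.

End Relabel.

Lemma label_step_invariant (lab : {ffun V -> nat}) :
  labels_invariant lab -> labels_invariant (label_step l r lab).
Proof.
case=> covered separated witnessed.
have [/existsP[v0 v00]|] := boolP [exists v, lab v == 0%N]; last first.
  by rewrite negb_exists => /forallP/label_step_labelled->.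
have [vi [vj [vi0 vi_min vi_vj vj_max ->]]] := label_stepE v00.
split; [exact: relabel_covered | exact: relabel_separated
       | exact: relabel_witnessed].
Qed.

Lemma final_labels_invariant : labels_invariant (final_labels l r).
Proof.
rewrite /final_labels; elim: #|V| => [|n IHn] /=; last exact: label_step_invariant.
by split=> [v|w v|w]; rewrite ffunE.
Qed.

Definition unlabelled (lab : {ffun V -> nat}) := [set v | lab v == 0%N].

Lemma unlabelled_label_step (lab : {ffun V -> nat}) :
  unlabelled (label_step l r lab) \subset unlabelled lab.
Proof.
apply/subsetP => v; rewrite !inE.
have [/existsP[v0 v00]|] := boolP [exists v, lab v == 0%N]; last first.
  by rewrite negb_exists => /forallP/label_step_labelled->.
have [vi [vj [_ _ _ _ ->]]] := label_stepE v00.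
by case/relabel_eq0.
Qed.

Lemma unlabelled_label_step_proper (lab : {ffun V -> nat}) : unlabelled lab != set0 ->
  unlabelled (label_step l r lab) \proper unlabelled lab.
Proof.
case/set0Pn => v0; rewrite inE => v00.
rewrite properEneq unlabelled_label_step andbT.
have [vi [vj [vi0 _ _ _ ->]]] := label_stepE v00.
by apply/eqP => /setP/(_ vi); rewrite !inE vi0 (negbTE (relabel_vi lab vi vj)).
Qed.

Lemma card_unlabelled_iter n :
  (#|unlabelled (iter n (label_step l r) [ffun => 0%N])| <= #|V| - n)%N.
Proof.
elim: n => [|n IHn] /=; first by rewrite subn0 max_card.
set lab := iter n _ _ in IHn *.
have [none|some] := eqVneq (unlabelled lab) set0.
  by move: (unlabelled_label_step lab); rewrite none subset0 => /eqP->; rewrite cards0.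
have := leq_trans (proper_card (unlabelled_label_step_proper _ some)) IHn.
by rewrite subnS; case: (#|V| - n)%N.
Qed.

Lemma final_labels_neq0 v : final_labels l r v != 0%N.
Proof.
have := card_unlabelled_iter #|V|; rewrite subnn leqn0 cards_eq0 => /eqP/setP/(_ v).
by rewrite !inE => ->.
Qed.

Local Notation V2 := (V_lab l r 2).
Local Notation k := #|V2|.

Lemma final_labels_covered : labels_covered (final_labels l r).
Proof. by case: final_labels_invariant. Qed.

Lemma final_labels_witnessed : labels_witnessed (final_labels l r).
Proof. by case: final_labels_invariant. Qed.

Lemma size_rV2 : size (rV2 l r) = k.
Proof. by rewrite /rV2 size_sort size_map -cardE. Qed.

Lemma sorted_rV2 : sorted <%R (rV2 l r).
Proof.
rewrite lt_sorted_uniq_le sort_uniq sort_sorted ?andbT; last exact: le_total.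
by rewrite map_inj_uniq ?enum_uniq.
Qed.

Lemma rw_in_V2 {i : nat} : (1 <= i <= k)%N -> exists2 w, w \in V2 & r w = rw l r i.
Proof.
case/andP=> i_gt0 i_le_k.
have : rw l r i \in rV2 l r by rewrite mem_nth // size_rV2 prednK.
by rewrite /rV2 mem_sort => /mapP[w]; rewrite mem_enum => w2 ->; exists w.
Qed.

Lemma rw_lt i j : (0 < i < j)%N -> (j <= k)%N -> rw l r i < rw l r j.
Proof.
case/andP=> i_gt0 i_lt_j j_le_k; have j_gt0 := ltn_trans i_gt0 i_lt_j.
apply: (sorted_ltn_nth lt_trans); rewrite ?inE ?size_rV2 ?prednK //.
- exact: sorted_rV2.
- exact: leq_trans (ltnW i_lt_j) j_le_k.
- by rewrite -ltnS !prednK.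
Qed.

Lemma rw_le i j : (0 < i <= j)%N -> (j <= k)%N -> rw l r i <= rw l r j.
Proof.
case/andP=> i_gt0; rewrite leq_eqVlt => /orP[/eqP-> //|i_lt_j] j_le_k.
by rewrite ltW ?rw_lt ?i_gt0.
Qed.

Lemma mem_Cblock i u : (1 <= i <= k)%N -> r u <= rw l r i ->
  ((1 < i)%N -> rw l r i.-1 < r u) -> u \in Cblock l r i.
Proof.
case/andP=> i_gt0 i_le_k u_le u_gt; rewrite /Cblock.
case: eqP => [_|_]; first by rewrite inE.
case: eqP => [i1|i_neq1]; first by rewrite inE -i1.
have i_gt1 : (1 < i)%N by rewrite ltn_neqAle i_gt0 andbT eq_sym; apply/eqP.
by case: eqP => [ik|_]; rewrite inE -?ik u_gt // u_le.
Qed.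

Lemma Cblock_bounds {i : nat} {u : V} : (1 <= i <= k)%N -> u \in Cblock l r i ->
  ((i < k)%N -> r u <= rw l r i) /\ ((1 < i)%N -> rw l r i.-1 < r u).
Proof.
case/andP=> i_gt0 i_le_k; rewrite /Cblock.
case: eqP => [k1|_].
  by move=> _; rewrite k1 in i_le_k *; rewrite ltnNge i_gt0 ltnNge i_le_k.
case: eqP => [->|_]; first by rewrite inE.
case: eqP => [->|_]; rewrite inE; first by rewrite ltnn.
by case/andP.
Qed.

Lemma Cblock_disjoint i j u : (0 < i < j)%N -> (j <= k)%N ->
  u \in Cblock l r i -> u \notin Cblock l r j.
Proof.
case/andP=> i_gt0 i_lt_j j_le_k u_i; apply/negP => u_j.
have j_gt0 := ltn_trans i_gt0 i_lt_j.
have i_range : (1 <= i <= k)%N by rewrite i_gt0 ltnW // (leq_trans i_lt_j).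
have j_range : (1 <= j <= k)%N by rewrite j_gt0.
have [/(_ (leq_trans i_lt_j j_le_k)) u_le _] := Cblock_bounds i_range u_i.
have [_ /(_ (leq_ltn_trans i_gt0 i_lt_j)) u_gt] := Cblock_bounds j_range u_j.
have := lt_le_trans u_gt u_le; rewrite ltNge rw_le //.
  by rewrite i_gt0 -ltnS prednK.
exact: leq_trans (leq_pred j) j_le_k.
Qed.

Lemma dominating_meets_Cblock (D : {set V}) : dominating l r D ->
  forall i, (1 <= i <= k)%N -> (0 < #|D :&: Cblock l r i|)%N.
Proof.
move=> domD i i_range; have [w w2 rw_i] := rw_in_V2 i_range.
rewrite inE in w2; have [a [a_nb a_sep]] := final_labels_witnessed w w2.
have [u uD a_u] : exists2 u, u \in D & meets l r a u.
  case: (domD a) => [aD|[u uD]]; first by exists a; rewrite ?meets_refl.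
  by case/andP; rewrite meetsC; exists u.
apply/card_gt0P; exists u; rewrite inE uD mem_Cblock // -?rw_i ?a_nb //.
case/andP: i_range => i_gt0 i_le_k i_gt1.
have i1_range : (1 <= i.-1 <= k)%N.
  by rewrite -ltnS prednK // i_gt1 (leq_trans (leq_pred i)).
have [w' w'2 rw_i1] := rw_in_V2 i1_range; rewrite inE in w'2.
rewrite -rw_i1 (lt_le_trans (a_sep w' w'2 _)) //; last by case/andP: a_u.
by rewrite rw_i1 rw_i rw_lt // (andP i1_range).1 ltn_predL.
Qed.

Lemma V2_dominating : dominating l r V2.
Proof.
move=> v; have [w w2 w_v] := final_labels_covered v (final_labels_neq0 v).
have [<-|w_neq_v] := eqVneq w v; first by left; rewrite inE.
by right; exists w; rewrite ?inE // /iadj w_neq_v.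
Qed.

Lemma card_V2_le_dominating (D : {set V}) : dominating l r D -> (k <= #|D|)%N.
Proof.
move=> domD.
have meets_block (x : 'I_k) : exists u, u \in D :&: Cblock l r x.+1.
  by apply/set0Pn; rewrite -card_gt0 dominating_meets_Cblock ?ltn_ord.
have [g gP] := fin_all_exists meets_block.
have g_neq (x y : 'I_k) : (x < y)%N -> g x != g y.
  move=> x_lt_y; apply/eqP => gxy; move: (gP x) (gP y); rewrite gxy !inE.
  case/andP=> _ gy_x /andP[_]; apply/negP.
  by apply: Cblock_disjoint gy_x; rewrite ?ltnS.
have g_inj : injective g.
  move=> x y gxy; apply/val_inj.
  by case: (ltngtP x y) => [/g_neq|/g_neq|//]; rewrite gxy eqxx.
rewrite -[k]card_ord -(card_codom g_inj); apply/subset_leq_card/subsetP.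
by move=> _ /codomP[x ->]; move: (gP x); rewrite inE => /andP[].
Qed.

End LabelingProcedure.

Theorem lemma12 (R : realDomainType) (V : finType) (l r : V -> R)
  (hlr : forall v, l v <= r v)
  (hr : injective r)
  (hconn : connected_graph l r) :
  (forall D : {set V}, dominating l r D ->
     forall i : nat, (1 <= i <= #|V_lab l r 2|)%N ->
       (0 < #|D :&: Cblock l r i|)%N)
  /\ dominating l r (V_lab l r 2)
  /\ (forall D : {set V}, dominating l r D -> (#|V_lab l r 2| <= #|D|)%N).
Proof.
split; first exact: dominating_meets_Cblock.
split; first exact: V2_dominating.
exact: card_V2_le_dominating.
Qed.
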